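(* Let $t\ge 3$ and let $\mathcal{H}$ be an $n$-vertex $3$-uniform hypergraph that does not contain $K_{2,t}$ as a trace. Let $A$ be the set of edges of $\mathcal{H}$ containing at least one pair of vertices whose co-degree in $\mathcal{H}$ is $1$, and let $B=\mathcal{H}\setminus A$; for a vertex $x$ let $d(x)$ be the number of edges of $B$ containing $x$. For a vertex $x$, let $N_1(x)=\{z: \exists e\in B,\ \{x,z\}\subseteq e\}$ and $N_2(x)=\{z\notin N_1(x)\cup\{x\}: \exists e\in B,\ z\in e,\ e\cap N_1(x)\neq\emptyset\}$. Fix a vertex $v$, and for $u\in N_1(v)$ let $E_u=\{e\in B: e\cap N_1(v)=\{u\}\}$ and $V_u=\{w\in N_2(v): \exists e\in E_u,\ w\in e\}$. Then for all $u\in N_1(v)$, $$|V_u|\ge \frac{2}{3t-3}\left(d(u)-(3t-3)-3(t-1)^2(6t-2)\right).$$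
   Context: A hypergraph $\mathcal{H}$ contains a graph $F$ (vertices $v_1,\dots,v_p$, edges $e_1,\dots,e_q$) as a trace if there exist distinct vertices $w_1,\dots,w_p\in V(\mathcal{H})$ and distinct edges $f_1,\dots,f_q\in E(\mathcal{H})$ such that whenever $e_i=v_\alpha v_\beta$, $f_i\cap\{w_1,\dots,w_p\}=\{w_\alpha,w_\beta\}$. The co-degree of a pair $\{x,y\}$ in $\mathcal{H}$ is the number of edges of $\mathcal{H}$ containing $\{x,y\}$. $\mathcal{H}\setminus A$ denotes the hypergraph on $V(\mathcal{H})$ with edge set $E(\mathcal{H})\setminus A$. *)

From mathcomp Require Import all_boot all_order all_algebra.
Set Implicit Arguments. Unset Strict Implicit. Unset Printing Implicit Defensive.

Section Hyper.
Variable T : finType.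

Definition uniform (k : nat) (H : {set {set T}}) := forall e, e \in H -> #|e| = k.

(* H contains the graph F = (V, E) as a trace: E is the list of edges
   e_1..e_q of F, each given as an ordered pair of its endpoints. *)
Definition contains_trace (V : finType) (E : seq (V * V)) (H : {set {set T}}) :=
  exists (w : V -> T) (f : 'I_(size E) -> {set T}),
    injective w /\ injective f /\
    forall i : 'I_(size E),
      f i \in H /\
      f i :&: [set w x | x : V] = [set w (tnth (in_tuple E) i).1; w (tnth (in_tuple E) i).2].

Definition codeg (H : {set {set T}}) (x y : T) := #|[set e in H | (x \in e) && (y \in e)]|.

Definition Aset (H : {set {set T}}) :=
  [set e in H | [exists x, exists y,
     [&& x != y, x \in e, y \in e & codeg H x y == 1]]].
Definition Bset (H : {set {set T}}) := H :\: Aset H.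

Definition degB (H : {set {set T}}) (x : T) := #|[set e in Bset H | x \in e]|.

Definition N1 (H : {set {set T}}) (x : T) :=
  [set z | (z != x) && [exists e in Bset H, (x \in e) && (z \in e)]].
Definition N2 (H : {set {set T}}) (x : T) :=
  [set z | (z \notin N1 H x) && (z != x) &&
     [exists e in Bset H, (z \in e) && (e :&: N1 H x != set0)]].

Definition Eu (H : {set {set T}}) (v u : T) :=
  [set e in Bset H | e :&: N1 H v == [set u]].
Definition Vu (H : {set {set T}}) (v u : T) :=
  [set w in N2 H v | [exists e in Eu H v u, w \in e]].
End Hyper.

Definition K2t_edges (t : nat) : seq (('I_2 + 'I_t)%type * ('I_2 + 'I_t)%type) :=
  [seq (inl i, inr j) | i <- enum 'I_2, j <- enum 'I_t].

(* Let x != y and let every vertex z of a set Z lie in edges {x, z, s} and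
   {y, z, r} with s, r outside {x, y, z} (a double fan; s and r are partners of
   z).  Call j a dependent of i when i is the only partner of j; each j depends
   on at most one i, so at most a third of Z has two or more dependents.
   Repeatedly choosing a vertex with at most one dependent for each of x and y,
   and discarding it together with those dependents, gives t vertices of Z whose
   partners avoid the chosen ones as soon as |Z| >= 3t - 2: a K_{2,t} trace.
   Hence |Z| <= 3t - 3.

   Every pair inside an edge of B has co-degree at least 2, so fans bound the
   co-degrees in B by 3t - 3, and the vertices w of N_1(v) that share with u a
   B-edge avoiding v by 6t - 6.  A B-edge at u contains v, or such a w, or lies
   in E_u; each edge of E_u has its two vertices other than u in V_u, and each
   w in V_u lies in at most 3t - 3 of them, so 2|E_u| <= (3t - 3)|V_u|. *)

From mathcomp Require Import all_boot all_order all_algebra.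
From mathcomp Require Import zify lra.
Set Implicit Arguments. Unset Strict Implicit. Unset Printing Implicit Defensive.

Lemma double_count (A B : finType) (P : {pred A}) (Q : {pred B}) (r : A -> B -> bool) :
  \sum_(a in P) #|[set b in Q | r a b]| = \sum_(b in Q) #|[set a in P | r a b]|.
Proof.
have card_sum (X Y : finType) (R : {pred Y}) (f : X -> Y -> bool) x :
    #|[set y in R | f x y]| = \sum_(y in R) f x y.
  by rewrite -sum1dep_card big_mkcondr; apply: eq_bigr => y _; case: (f x y).
rewrite (eq_bigr _ (fun a _ => card_sum _ _ _ _ a)).
rewrite (eq_bigr _ (fun b _ => card_sum _ _ _ (fun b a => r a b) b)).
exact: exchange_big.
Qed.

Lemma card_bigcup_le (I T : finType) (P : {pred I}) (F : I -> {set T}) :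
  #|\bigcup_(i in P) F i| <= \sum_(i in P) #|F i|.
Proof.
elim/big_rec2: _ => [|i B s _ IH]; first by rewrite cards0.
by rewrite cardsU; lia.
Qed.

Section Dependents.
Variables (T : finType) (p : rel T).
Hypothesis p_sym : symmetric p.

Definition has_partner_outside (X : {set T}) (i : T) := exists s, (s \notin X) && p i s.

Definition dependent (Z D : {set T}) (i j : T) :=
  [&& j \in Z, j != i & [forall s, (s \notin D) && p j s ==> (s == i)]].

Variables (Z D : {set T}).
Hypothesis ZD : [disjoint Z & D].
Hypothesis Z_partner : {in Z, forall i, has_partner_outside D i}.

Definition heavy := [set i in Z | 1 < #|[set j | dependent Z D i j]|].

Lemma dependent_sole_partner i j s :
  dependent Z D i j -> s \notin D -> p j s -> s = i.
Proof. by case/and3P=> _ _ /forallP/(_ s) + sD pjs; rewrite sD pjs => /eqP. Qed.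

Lemma dependent_partner i j :
  dependent Z D i j -> [/\ j \in Z, j \notin D & p i j].
Proof.
move=> dij; have jZ : j \in Z by case/and3P: dij.
have [s /andP[sD pjs]] := Z_partner jZ.
rewrite -(dependent_sole_partner dij sD pjs) p_sym.
by split; rewrite ?(disjointFr ZD jZ).
Qed.

Lemma dependent_inj i i' j : dependent Z D i j -> dependent Z D i' j -> i = i'.
Proof.
move=> dij di'j; have jZ : j \in Z by case/and3P: dij.
have [s /andP[sD pjs]] := Z_partner jZ.
by rewrite -(dependent_sole_partner dij sD pjs) (dependent_sole_partner di'j sD pjs).
Qed.

Lemma heavy_not_dependent i k : i \in heavy -> ~~ dependent Z D k i.
Proof.
rewrite inE => /andP[_]; apply: contraTN => dki; rewrite -leqNgt.
apply/card_le1_eqP => j1 j2; rewrite !inE => /dependent_partner[_ j1D pij1].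
case/dependent_partner=> _ j2D pij2.
by rewrite (dependent_sole_partner dki j1D pij1) (dependent_sole_partner dki j2D pij2).
Qed.

(* Dependents of heavy vertices are light, and each vertex depends on at most
   one other: two or more light vertices are charged to every heavy one. *)
Lemma card_heavy : 3 * #|heavy| <= #|Z|.
Proof.
have heavyZ : heavy \subset Z by apply/subsetP => i; rewrite inE => /andP[].
have dep_light i : i \in heavy ->
    [set j | dependent Z D i j] = [set j in Z :\: heavy | dependent Z D i j].
  move=> iP; apply/setP => j; rewrite inE in_set in_setD.
  case: (boolP (dependent _ _ _ _)) => dij; rewrite ?andbF //.
  have [jZ _ _] := dependent_partner dij.
  suff jP : j \notin heavy by rewrite jZ jP.
  by apply: contraTN dij => /heavy_not_dependent.
have : 2 * #|heavy| <= \sum_(i in heavy) #|[set j | dependent Z D i j]|.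
  by rewrite mulnC -sum_nat_const leq_sum // => i; rewrite inE => /andP[].
under eq_bigr => i iP do rewrite dep_light //.
rewrite double_count.
have : \sum_(j in Z :\: heavy) #|[set i in heavy | dependent Z D i j]| <= #|Z :\: heavy|.
  rewrite -sum1_card leq_sum // => j _; apply/card_le1_eqP => i i'.
  by rewrite !in_set => /andP[_ dij] /andP[_ di'j]; exact: dependent_inj di'j dij.
move=> sum_le /leq_trans/(_ sum_le); rewrite cardsD (setIidPr heavyZ).
have := subset_leq_card heavyZ; lia.
Qed.

Lemma light_partner i : i \in Z -> #|[set j | dependent Z D i j]| <= 1 ->
  exists s, [/\ s \notin D, p i s & forall j, dependent Z D i j -> j = s].
Proof.
move=> iZ /card_le1_eqP dep1.
case: (set_0Vmem [set j | dependent Z D i j]) => [dep0|[j]].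
  have [s /andP[sD pis]] := Z_partner iZ; exists s; split=> // j dij.
  by have := in_set0 j; rewrite -dep0 inE dij.
rewrite inE => dij; have [_ jD pij] := dependent_partner dij.
by exists j; split=> // j' dij'; apply: dep1; rewrite inE.
Qed.

Lemma partner_outside_setU1 i s j : (forall j, dependent Z D i j -> j = s) ->
  j \in Z -> j != i -> j != s -> has_partner_outside (i |: D) j.
Proof.
move=> dep_s jZ ji js.
case: (boolP [forall s, (s \notin D) && p j s ==> (s == i)]) => F.
  have /dep_s/eqP : dependent Z D i j by rewrite /dependent jZ ji F.
  by rewrite (negbTE js).
case/forallPn: F => s0; rewrite negb_imply => /andP[/andP[s0D ps0] s0i].
by exists s0; rewrite !inE negb_or s0i s0D ps0.
Qed.

End Dependents.

Lemma exists_light (T : finType) (px py : rel T) (Z D : {set T}) :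
  symmetric px -> symmetric py -> [disjoint Z & D] ->
  {in Z, forall i, has_partner_outside px D i} ->
  {in Z, forall i, has_partner_outside py D i} -> 0 < #|Z| ->
  exists2 i, i \in Z & (#|[set j | dependent px Z D i j]| <= 1) &&
                      (#|[set j | dependent py Z D i j]| <= 1).
Proof.
move=> sx sy ZD Zx Zy Z_gt0.
have hx := card_heavy sx ZD Zx; have hy := card_heavy sy ZD Zy.
have /subsetPn[i iZ] : ~~ (Z \subset heavy px Z D :|: heavy py Z D).
  apply/negP => /subset_leq_card; have [+ _] := leq_card_setU (heavy px Z D) (heavy py Z D).
  lia.
rewrite !inE iZ /= => /norP[]; rewrite -!leqNgt => ix iy.
by exists i => //; rewrite ix iy.
Qed.

Lemma exists_partnered_subset (T : finType) (px py : rel T) :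
  symmetric px -> symmetric py -> irreflexive px -> irreflexive py ->
  forall t (Z D : {set T}), [disjoint Z & D] ->
  {in Z, forall i, has_partner_outside px D i} ->
  {in Z, forall i, has_partner_outside py D i} ->
  3 * t <= #|Z| + 2 ->
  exists S : {set T}, [/\ S \subset Z, #|S| = t &
    {in S, forall i, has_partner_outside px (S :|: D) i /\
                     has_partner_outside py (S :|: D) i}].
Proof.
move=> sx sy ix iy t; elim: t => [|t IH] Z D ZD Zx Zy cardZ.
  by exists set0; split; rewrite ?sub0set ?cards0 // => i; rewrite inE.
have [i iZ /andP[lx ly]] := exists_light sx sy ZD Zx Zy (ltac:(lia) : 0 < #|Z|).
have [s [sD pis dep_s]] := light_partner sx ZD Zx iZ lx.
have [r [rD pir dep_r]] := light_partner sy ZD Zy iZ ly.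
set Z' := Z :\: [set i; s; r].
have Z'D : [disjoint Z' & i |: D].
  rewrite disjoint_subset; apply/subsetP => j.
  by rewrite !inE => /andP[/norP[/norP[ji _] _] jZ]; rewrite negb_or ji (disjointFr ZD jZ).
have cardZ' : 3 * t <= #|Z'| + 2.
  have : #|Z :&: [set i; s; r]| <= 3.
    by apply: leq_trans (subset_leq_card (subsetIr _ _)) _; rewrite !cardsU !cards1; lia.
  by rewrite /Z' cardsD; lia.
have Z'x : {in Z', forall j, has_partner_outside px (i |: D) j}.
  move=> j; rewrite !inE => /andP[/norP[/norP[ji js] _] jZ].
  exact: partner_outside_setU1 dep_s jZ ji js.
have Z'y : {in Z', forall j, has_partner_outside py (i |: D) j}.
  move=> j; rewrite !inE => /andP[/norP[/norP[ji _] jr] jZ].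
  exact: partner_outside_setU1 dep_r jZ ji jr.
have [S' [S'Z' cardS' partnered]] := IH Z' (i |: D) Z'D Z'x Z'y cardZ'.
have notS' j : j \in [set i; s; r] -> j \notin S'.
  by move=> jisr; apply: contraTN jisr => /(subsetP S'Z'); rewrite inE => /andP[].
exists (i |: S'); split.
- by rewrite subUset sub1set iZ (subset_trans S'Z') ?subsetDl.
- by rewrite cardsU1 notS' ?cardS' // !inE eqxx.
rewrite -setUA setUCA => j /setU1P[->|/partnered //].
have si : s != i by apply: contraTneq pis => ->; rewrite ix.
have ri : r != i by apply: contraTneq pir => ->; rewrite iy.
split; [exists s | exists r]; by rewrite ?pis ?pir andbT !inE ?(negbTE si) ?(negbTE ri)
  ?(negbTE sD) ?(negbTE rD) !orbF notS' // !inE eqxx ?orbT.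
Qed.

Lemma K2t_edges_uniq t : uniq (K2t_edges t).
Proof.
by apply: allpairs_uniq; rewrite ?enum_uniq // => [[a b] [c d] _ _ /= [-> ->]].
Qed.

Lemma K2t_edgesP t (p : ('I_2 + 'I_t) * ('I_2 + 'I_t)) :
  p \in K2t_edges t -> exists i j, p = (inl i, inr j).
Proof. by case/allpairsP => [[i j] [_ _ ->]]; exists i, j. Qed.

Lemma K2t_edges_simple t :
  {in K2t_edges t &, forall p q, [set p.1; p.2] = [set q.1; q.2] -> p = q}.
Proof.
move=> p q /K2t_edgesP[i [j ->]] /K2t_edgesP[i' [j' ->]] /= /setP pq.
have := pq (inl i); have := pq (inr j); rewrite !inE !eqxx /=.
by move=> /esym/eqP[->] /esym/orP[/eqP[->]|/eqP].
Qed.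

Section Traces.
Variables (T : finType) (H : {set {set T}}).

Lemma contains_trace_edgewise (V : finType) (E : seq (V * V)) (w : V -> T) :
  injective w -> uniq E ->
  {in E &, forall p q, [set p.1; p.2] = [set q.1; q.2] -> p = q} ->
  {in E, forall p, exists e, e \in H /\ e :&: [set w x | x : V] = [set w p.1; w p.2]} ->
  contains_trace E H.
Proof.
move=> w_inj E_uniq E_simple E_traced.
pose pE := tnth (in_tuple E).
have /fin_all_exists[f f_traced] k :
    exists e, e \in H /\ e :&: [set w x | x : V] = [set w (pE k).1; w (pE k).2].
  exact/E_traced/mem_tnth.
exists w, f; split=> //; split=> [k1 k2 f12|k]; last exact: f_traced.
suff : pE k1 = pE k2.
  pose p0 := pE k1; rewrite /pE !(tnth_nth p0) /=.
  by move/eqP; rewrite nth_uniq // => /eqP/val_inj.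
apply: E_simple; rewrite ?mem_tnth //; apply: (imset_inj w_inj).
by rewrite !imsetU1 !imset_set1 -(proj2 (f_traced k1)) -(proj2 (f_traced k2)) f12.
Qed.

Lemma contains_trace_K2t t (X S : {set T}) :
  #|X| = 2 -> #|S| = t -> [disjoint X & S] ->
  (forall z c, z \in X -> c \in S -> exists2 s, s \notin X :|: S & [set z; c; s] \in H) ->
  contains_trace (K2t_edges t) H.
Proof.
move=> cardX cardS XS fan.
pose w (a : 'I_2 + 'I_t) := match a with
  | inl i => enum_val (cast_ord (esym cardX) i)
  | inr j => enum_val (cast_ord (esym cardS) j) end.
have wX i : w (inl i) \in X by apply: enum_valP.
have wS j : w (inr j) \in S by apply: enum_valP.
have w_inj : injective w.
  move=> [i|j] [i'|j'] e.
  - by move: e => /enum_val_inj/cast_ord_inj->.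
  - by have := disjointFr XS (wX i); rewrite e wS.
  - by have := disjointFr XS (wX i'); rewrite -e wS.
  - by move: e => /enum_val_inj/cast_ord_inj->.
apply: (contains_trace_edgewise w_inj (K2t_edges_uniq t) (@K2t_edges_simple t)).
move=> _ /K2t_edgesP[i [j ->]] /=.
have [s sXS edge] := fan _ _ (wX i) (wS j).
exists [set w (inl i); w (inr j); s]; split=> //.
have sW : s \notin [set w a | a : 'I_2 + 'I_t].
  by apply/imsetP=> [[[i'|j'] _ sw]]; move: sXS; rewrite sw inE ?wX ?wS ?orbT.
rewrite setIUl (disjoint_setI0 (_ : [disjoint [set s] & _])) ?disjoints1 // setU0.
by apply/setIidPl; rewrite subUset !sub1set !imset_f.
Qed.

End Traces.

Section Hypergraph.
Variables (T : finType) (H : {set {set T}}).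

Lemma card3_set3 (e : {set T}) a b : #|e| = 3 -> a \in e -> b \in e -> a != b ->
  exists c, [/\ c != a, c != b & e = [set a; b; c]].
Proof.
move=> e3 ae be ab.
have /cards1P[c ec] : #|e :\ a :\ b| == 1.
  by move: e3; rewrite (cardsD1 a) ae (cardsD1 b (e :\ a)) !inE eq_sym ab be; lia.
have /setD1P[cb /setD1P[ca ce]] : c \in e :\ a :\ b by rewrite ec set11.
exists c; split=> //; apply/eqP; rewrite eq_sym eqEcard e3.
rewrite !subUset !sub1set ae be ce /= setUC cardsU1 cards2 !inE.
by rewrite negb_or ab ca cb.
Qed.

Lemma set3C (a b c : T) : [set a; b; c] = [set a; c; b].
Proof. by apply/setP => z; rewrite !inE -!orbA (orbC (z == b)). Qed.

Lemma Bset_sub : Bset H \subset H.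
Proof. exact: subsetDl. Qed.

Lemma uniform_Bset k : uniform k H -> uniform k (Bset H).
Proof. by move=> Hk e /(subsetP Bset_sub)/Hk. Qed.

Lemma Bset_other_edge e a b :
  uniform 3 H -> e \in Bset H -> a \in e -> b \in e -> a != b ->
  exists s, [/\ s != a, s != b, [set a; b; s] \in H & [set a; b; s] != e].
Proof.
move=> H3 /setDP[eH eA] ae be ab.
have codeg_ab : codeg H a b != 1.
  apply: contra eA => /eqP codeg1; rewrite inE eH; apply/existsP; exists a.
  by apply/existsP; exists b; rewrite ab ae be codeg1.
have e_ab : e \in [set e0 in H | (a \in e0) && (b \in e0)] by rewrite !inE eH ae be.
move: codeg_ab; rewrite /codeg (cardsD1 e) e_ab add1n eqSS -lt0n.
case/card_gt0P => e' /setD1P[e'e]; rewrite inE => /and3P[e'H ae' be'].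
have [s [sa sb e'E]] := card3_set3 (H3 _ e'H) ae' be' ab.
by exists s; rewrite -e'E.
Qed.

Lemma card_fans_lt t (x y : T) (Z : {set T}) :
  ~ contains_trace (K2t_edges t) H -> x != y -> x \notin Z -> y \notin Z ->
  {in Z, forall c, exists2 s, s \notin [set x; y; c] & [set x; c; s] \in H} ->
  {in Z, forall c, exists2 s, s \notin [set x; y; c] & [set y; c; s] \in H} ->
  #|Z| + 2 < 3 * t.
Proof.
move=> noK2t xy xZ yZ fan_x fan_y; rewrite ltnNge; apply/negP => cardZ; apply: noK2t.
pose X := [set x; y].
pose fan z : rel T := fun a b => ([set z; a; b] \in H) && (a != b).
have fan_sym z : symmetric (fan z) by move=> a b; rewrite /fan set3C eq_sym.
have fan_irr z : irreflexive (fan z) by move=> a; rewrite /fan eqxx andbF.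
have ZX : [disjoint Z & X].
  by rewrite disjoint_sym disjoints_subset /X subUset !sub1set !inE xZ yZ.
have fan_partner z :
    {in Z, forall c, exists2 s, s \notin [set x; y; c] & [set z; c; s] \in H} ->
    {in Z, forall c, has_partner_outside (fan z) X c}.
  move=> fan_z c cZ; have [s] := fan_z c cZ.
  rewrite !inE !negb_or => /andP[/andP[sx sy] sc] e.
  by exists s; rewrite !inE negb_or sx sy /fan e eq_sym sc.
have [S [SZ cardS partnered]] := exists_partnered_subset (fan_sym x) (fan_sym y)
  (fan_irr x) (fan_irr y) ZX (fan_partner x fan_x) (fan_partner y fan_y) cardZ.
apply: (contains_trace_K2t (X := X) (S := S)) => //.
- by rewrite cards2 xy.
- by rewrite disjoint_sym (disjointWl SZ).
move=> z c zX /partnered[[s /andP[sSX /andP[e _]]] [r /andP[rSX /andP[e' _]]]].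
by rewrite setUC; case/set2P: zX => ->; [exists s | exists r].
Qed.

Definition link (G : {set {set T}}) (x y : T) :=
  [set z | (z \notin [set x; y]) && ([set x; y; z] \in G)].

Lemma in_link (G : {set {set T}}) x y z :
  (z \in link G x y) = (z \notin [set x; y]) && ([set x; y; z] \in G).
Proof. exact: in_set. Qed.

Lemma card_link_Bset_lt t x y :
  uniform 3 H -> ~ contains_trace (K2t_edges t) H -> x != y ->
  #|link (Bset H) x y| + 2 < 3 * t.
Proof.
move=> H3 noK2t xy.
apply: card_fans_lt noK2t xy _ _ _ _; rewrite ?in_link ?set21 ?set22 //.
all: move=> z; rewrite in_link in_set2 negb_or => /andP[/andP[zx zy] eB].
all: have xe : x \in [set x; y; z] by rewrite !inE eqxx.
all: have ye : y \in [set x; y; z] by rewrite !inE eqxx orbT.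
all: have ze : z \in [set x; y; z] by rewrite !inE eqxx !orbT.
- have [s [sx sz sH se]] := Bset_other_edge H3 eB xe ze (contra_neq esym zx).
  exists s => //; rewrite !inE (negbTE sx) (negbTE sz) orbF /=.
  by apply: contraNneq se => ->; rewrite set3C.
- have [s [sy sz sH se]] := Bset_other_edge H3 eB ye ze (contra_neq esym zy).
  exists s => //; rewrite !inE (negbTE sy) (negbTE sz) !orbF.
  by apply: contraNneq se => ->; apply/eqP/setP => w; rewrite !inE orbC orbA.
Qed.

Lemma codeg_le_link (G : {set {set T}}) x y : uniform 3 G -> x != y ->
  codeg G x y <= #|link G x y|.
Proof.
move=> G3 xy; apply: leq_trans (leq_imset_card (fun z => [set x; y; z]) _).
apply/subset_leq_card/subsetP => e; rewrite inE => /andP[eG /andP[xe ye]].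
have [z [zx zy eE]] := card3_set3 (G3 _ eG) xe ye xy.
by apply/imsetP; exists z; rewrite // in_link -eE eG !inE negb_or zx zy.
Qed.

Lemma codeg_Bset_le t x y :
  uniform 3 H -> ~ contains_trace (K2t_edges t) H -> x != y ->
  codeg (Bset H) x y <= 3 * t - 3.
Proof.
move=> H3 noK2t xy; have := card_link_Bset_lt H3 noK2t xy.
have := codeg_le_link (uniform_Bset H3) xy; lia.
Qed.
End Hypergraph.

Section Neighbourhoods.
Variables (T : finType) (H : {set {set T}}) (v u : T).
Hypothesis H3 : uniform 3 H.
Hypothesis uN1 : u \in N1 H v.
Let H3B : uniform 3 (Bset H) := uniform_Bset H3.

Lemma in_N1 z : (z \in N1 H v) = (z != v) && [exists e in Bset H, (v \in e) && (z \in e)].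
Proof. exact: in_set. Qed.

Lemma N1_neq z : z \in N1 H v -> z != v.
Proof. by rewrite in_N1 => /andP[]. Qed.

Lemma in_N2 w : (w \in N2 H v) =
  [&& w \notin N1 H v, w != v & [exists e in Bset H, (w \in e) && (e :&: N1 H v != set0)]].
Proof. by rewrite in_set andbA. Qed.

Lemma in_Vu w : (w \in Vu H v u) = (w \in N2 H v) && [exists e in Eu H v u, w \in e].
Proof. exact: in_set. Qed.

Lemma in_Eu e : (e \in Eu H v u) = (e \in Bset H) && (e :&: N1 H v == [set u]).
Proof. exact: in_set. Qed.

Lemma Eu_edge e : e \in Eu H v u -> [/\ e \in Bset H, u \in e & v \notin e].
Proof.
rewrite in_Eu => /andP[eB /eqP eN1].
have ue : u \in e by have := set11 u; rewrite -eN1 => /setIP[].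
split=> //; apply/negP => ve.
have [c [cu cv eE]] := card3_set3 (H3B eB) ue ve (N1_neq uN1).
have : c \in e :&: N1 H v.
  rewrite inE in_N1 cv eE !inE eqxx !orbT /=; apply/existsP; exists e.
  by rewrite eB eE !inE !eqxx !orbT.
by rewrite eN1 inE (negbTE cu).
Qed.

Lemma Vu_edge e : e \in Eu H v u -> [set w in Vu H v u | w \in e] = e :\ u.
Proof.
move=> eEu; have [eB ue ve] := Eu_edge eEu; move: (eEu); rewrite in_Eu => /andP[_ /eqP eN1].
apply/setP => w; rewrite in_set in_setD1 in_Vu in_N2 andbC.
case: (boolP (w \in e)) => we; rewrite ?andbF //=.
case: (w =P u) => [->|/eqP wu] /=; first by rewrite uN1.
have -> : w \notin N1 H v.
  by apply: contra wu => wN1; rewrite -in_set1 -eN1 inE we.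
have -> : w != v by apply: contraNneq ve => <-.
rewrite /=; apply/andP; split; apply/existsP; exists e; rewrite ?eEu ?eB ?we //=.
by apply/set0Pn; exists u; rewrite eN1 set11.
Qed.

Definition N1_partners :=
  [set w in N1 H v :\ u | [exists e in Bset H, [&& u \in e, w \in e & v \notin e]]].

Lemma degB_le : degB H u <=
  codeg (Bset H) u v + \sum_(w in N1_partners) codeg (Bset H) u w + #|Eu H v u|.
Proof.
pose codegB w := [set e in Bset H | (u \in e) && (w \in e)].
have cover : [set e in Bset H | u \in e] \subset
    codegB v :|: \bigcup_(w in N1_partners) codegB w :|: Eu H v u.
  apply/subsetP => e; rewrite inE => /andP[eB ue]; rewrite !in_setU.
  case: (boolP (v \in e)) => ve; first by rewrite inE eB ue ve.
  case: (boolP [exists w in N1 H v :\ u, w \in e]) => [/existsP[w /andP[wN1 we]]|].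
    apply/orP; left; apply/orP; right; apply/bigcupP; exists w; last by rewrite inE eB ue we.
    by rewrite inE wN1; apply/existsP; exists e; rewrite eB ue we ve.
  move=> /existsPn noN1; rewrite in_Eu eB; apply/orP; right; apply/eqP/setP => z.
  rewrite in_setI in_set1; case: (z =P u) => [->|/eqP zu]; first by rewrite ue uN1.
  by have := noN1 z; rewrite in_setD1 zu /= andbC => /negbTE.
rewrite /degB (leq_trans (subset_leq_card cover)) // !cardsU.
move: (card_bigcup_le N1_partners codegB); rewrite /codegB /codeg /=; lia.
Qed.

Variable t : nat.
Hypothesis noK2t : ~ contains_trace (K2t_edges t) H.

Lemma card_Eu_le : 2 * #|Eu H v u| <= #|Vu H v u| * (3 * t - 3).
Proof.
have -> : 2 * #|Eu H v u| = \sum_(e in Eu H v u) #|[set w in Vu H v u | w \in e]|.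
  rewrite mulnC -sum_nat_const; apply: eq_bigr => e eEu.
  have [eB ue _] := Eu_edge eEu.
  have := H3B eB.
  by rewrite Vu_edge // (cardsD1 u) ue; case.
rewrite double_count -sum_nat_const leq_sum // => w wVu.
have uw : u != w.
  by apply: contraTneq wVu => <-; rewrite in_Vu in_N2 uN1.
apply: leq_trans (codeg_Bset_le H3 noK2t uw); apply/subset_leq_card/subsetP => e.
case/setIdP => eEu we; have [eB ue _] := Eu_edge eEu; apply/setIdP; by rewrite ue we.
Qed.

Lemma card_N1_partners_le : #|N1_partners| <= 6 * t - 6.
Proof.
have uv := N1_neq uN1.
pose Y := [set w in N1_partners | [set u; v; w] \notin Bset H].
have cover : N1_partners \subset link (Bset H) u v :|: Y.
  apply/subsetP => w wP; rewrite in_setU; case: (boolP ([set u; v; w] \in Bset H)) => uvwB.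
    move: wP => /setIdP[/setD1P[wu /N1_neq wv] _].
    by rewrite in_link uvwB !inE negb_or wu wv.
  by apply/orP; right; apply/setIdP.
have partnerP w : w \in Y -> [/\ w != u, w \in N1 H v, [set u; v; w] \notin Bset H &
    exists2 e, e \in Bset H & [&& u \in e, w \in e & v \notin e]].
  case/setIdP => /setIdP[/setD1P[wu wN1] /exists_inP[e eB ewu]] uvwB.
  by split=> //; exists e.
have cardY : #|Y| + 2 < 3 * t.
  apply: (card_fans_lt noK2t (contra_neq esym uv)).
  - by apply: contraL uN1 => /partnerP[_]; rewrite in_N1 eqxx.
  - by apply/negP => /partnerP[]; rewrite eqxx.
  - move=> w /partnerP[wu]; rewrite in_N1 => /andP[wv /exists_inP[e eB /andP[ve we]]] uvwB _.
    have [p [pv pw eE]] := card3_set3 (H3B eB) ve we (contra_neq esym wv).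
    exists p; last by rewrite -eE (subsetP (Bset_sub H)).
    rewrite !inE (negbTE pv) (negbTE pw) orbF /=; apply: contraNneq uvwB => pu.
    suff -> : [set u; v; w] = e by [].
    by rewrite eE pu; apply/setP => z; rewrite !inE [RHS]orbC orbA.
  - move=> w /partnerP[wu _ _ [e eB /and3P[ue we ve]]].
    have [q [qu qw eE]] := card3_set3 (H3B eB) ue we (contra_neq esym wu).
    exists q; last by rewrite -eE (subsetP (Bset_sub H)).
    rewrite !inE (negbTE qu) (negbTE qw) !orbF.
    by apply: contraNneq ve => <-; rewrite eE !inE eqxx !orbT.
have := card_link_Bset_lt H3 noK2t uv; have := subset_leq_card cover.
have [le_U _] := leq_card_setU (link (Bset H) u v) Y; lia.
Qed.

Lemma two_degB_le : 2 * degB H u <=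
  #|Vu H v u| * (3 * t - 3) + 2 * (3 * t - 3) + 2 * ((6 * t - 6) * (3 * t - 3)).
Proof.
have sum_le : \sum_(w in N1_partners) codeg (Bset H) u w <= (6 * t - 6) * (3 * t - 3).
  apply: leq_trans (leq_mul card_N1_partners_le (leqnn _)).
  rewrite -sum_nat_const leq_sum // => w /setIdP[/setD1P[wu _] _].
  by apply: codeg_Bset_le; rewrite // eq_sym.
have := degB_le; have := codeg_Bset_le H3 noK2t (N1_neq uN1); have := card_Eu_le; lia.
Qed.
End Neighbourhoods.

Import GRing.Theory Num.Theory.
Local Open Scope ring_scope.

Theorem mainTheorem7 (T : finType) (n t : nat) (H : {set {set T}}) (v : T) :
  (3 <= t)%N -> #|T| = n -> uniform 3 H ->
  ~ contains_trace (K2t_edges t) H ->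
  forall u, u \in N1 H v ->
    (#|Vu H v u|%:R : rat) >=
      2%:R / (3 * t - 3)%N%:R *
        ((degB H u)%:R - (3 * t - 3)%N%:R - (3 * (t - 1) ^ 2 * (6 * t - 2))%N%:R).
Proof.
move=> t3 _ H3 noK2t u uN1.
have := two_degB_le H3 uN1 noK2t.
have : ((6 * t - 6) * (3 * t - 3) <= 3 * (t - 1) ^ 2 * (6 * t - 2))%N.
  by rewrite -mulnn; nia.
set c := (3 * t - 3)%N; set K := (3 * (t - 1) ^ 2 * (6 * t - 2))%N.
have c_gt0 : 0 < c%:R :> rat by rewrite ltr0n /c; lia.
move=> M_le deg_le.
have : (2 * degB H u <= #|Vu H v u| * c + 2 * c + 2 * K)%N by lia.
rewrite mulrAC ler_pdivrMr // -(ler_nat rat) !natrD !natrM; lra.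
Qed.
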